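(* Let $\gamma \in [0,1)$. Let $P$ be a valid p-value for a null hypothesis $H_0$, i.e. $P \in [0,1]$ and $\Pr(P \le s) \le s$ for all $s \in [0,1]$ under $H_0$, and let $Q$ be an arbitrary $[0,1]$-valued random variable, with any dependence structure between $P$ and $Q$. Let $T \in \{0,1\}$ be a random variable such that, conditionally on $(Q,P)$, $T \sim \mathrm{Bern}(1-\gamma Q)$ (i.e. $T$ is drawn based on $Q$ using additional independent randomness). Define the active p-value $$\tilde P := (1-T)\,Q + T\,(1-\gamma)^{-1} P.$$ Then $\tilde P$ is a valid p-value: under $H_0$, $\Pr(\tilde P \le s) \le s$ for all $s \in [0,1]$.
   Context: $Q$ is a ''proxy'' p-value on which no distributional assumption is made (it need not be superuniform under $H_0$). *)

From HB Require Import structures.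
From mathcomp Require Import all_boot all_order all_algebra.
From mathcomp Require Import all_classical all_reals all_analysis.
Set Implicit Arguments. Unset Strict Implicit. Unset Printing Implicit Defensive.
Import Order.TTheory GRing.Theory Num.Theory.
Local Open Scope classical_set_scope.
Local Open Scope ring_scope.

Definition valid_pvalue d (Om : measurableType d) (R : realType)
  (mu : probability Om R) (P : Om -> R) : Prop :=
  (forall w, 0 <= P w <= 1) /\
  forall s : R, 0 <= s <= 1 -> (mu [set w | (P w <= s)%R] <= s%:E)%E.

Definition superuniform d (Om : measurableType d) (R : realType)
  (mu : probability Om R) (X : Om -> R) : Prop :=
  forall s : R, 0 <= s <= 1 -> (mu [set w | (X w <= s)%R] <= s%:E)%E.

(* Conditionally on (Q,P), T ~ Bern(p(Q,P)):  for every measurable set A of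
   R x R,  Pr(T = 1, (Q,P) \in A) = E[ p(Q,P) 1{(Q,P) \in A} ]. *)
Definition cond_bernoulli d (Om : measurableType d) (R : realType)
  (mu : probability Om R) (T : Om -> R) (Q P : Om -> R) (p : R -> R -> R) : Prop :=
  forall A : set (R * R), measurable A ->
    mu ([set w | T w = 1] `&` (fun w => (Q w, P w)) @^-1` A) =
    (\int[mu]_(w in (fun w => (Q w, P w)) @^-1` A) (p (Q w) (P w))%:E)%E.

Definition active_pvalue (R : realType) (gamma : R) (Om : Type)
  (T Q P : Om -> R) : Om -> R :=
  fun w => (1 - T w) * Q w + T w * ((1 - gamma)^-1 * P w).

From HB Require Import structures.
From mathcomp Require Import all_boot all_order all_algebra.
From mathcomp Require Import all_classical all_reals all_analysis.
From mathcomp Require Import lra.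
Import Order.TTheory GRing.Theory Num.Theory.
Local Open Scope classical_set_scope.
Local Open Scope ring_scope.

(* The event {P~ <= s} splits into {T = 0, Q <= s} and {T = 1, P <= (1 - gamma) s}.
   The second has probability at most (1 - gamma) s by validity of P.  For the
   first, the conditional law of T gives
     Pr(T = 0, Q <= s) = E[gamma Q 1{Q <= s}] <= gamma s,
   so the two pieces add up to at most s, whatever the law of Q. *)

Section sublevel_sets.
Context {d} {Om : measurableType d} {R : realType} {f : Om -> R}.
Hypothesis mf : measurable_fun setT f.

Lemma measurable_sublevel (c : R) : measurable [set w | f w <= c].
Proof.
have := mf measurableT _ (measurable_itv `]-oo, c]); rewrite setTI.
by congr measurable; apply/seteqP; split => w /=; rewrite in_itv.
Qed.

Lemma measurable_level (c : R) : measurable [set w | f w = c].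
Proof.
by have := mf measurableT _ (measurable_set1 c); rewrite setTI.
Qed.

End sublevel_sets.

Lemma active_pvalue_le_setE {R : realType} {Om : Type} (gamma s : R)
    (T Q P : Om -> R) :
  gamma < 1 -> (forall w, T w = 0 \/ T w = 1) ->
  [set w | active_pvalue gamma T Q P w <= s] =
  ([set w | Q w <= s] `\` [set w | T w = 1]) `|`
  ([set w | T w = 1] `&` [set w | P w <= (1 - gamma) * s]).
Proof.
move=> g1 T01; have g1' : 0 < 1 - gamma by rewrite subr_gt0.
apply/seteqP; split=> w /=; rewrite /active_pvalue.
  case: (T01 w) => ->; rewrite ?subr0 ?subrr !(mul0r, mul1r, addr0, add0r).
    by move=> Qs; left; split=> //; apply/eqP; rewrite eq_sym oner_neq0.
  by rewrite ler_pdivrMl // => Ps; right.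
case=> [[Qs T1] | [-> Ps]].
  by case: (T01 w) T1 => -> // _; rewrite subr0 mul1r !mul0r addr0.
by rewrite subrr mul0r add0r mul1r ler_pdivrMl.
Qed.

Section proxy_branch.
Context {d} {Om : measurableType d} {R : realType} (mu : probability Om R).
Context {gamma s : R} {T Q P : Om -> R}.
Hypotheses (gamma_ge0 : 0 <= gamma) (s_ge0 : 0 <= s) (gammas_le1 : gamma * s <= 1).
Hypotheses (mQ : measurable_fun setT Q) (mT : measurable_fun setT T).
Hypothesis bernT : cond_bernoulli mu T Q P (fun q _ => 1 - gamma * q).

Let D := [set w | Q w <= s].
Let T1 := [set w | T w = 1].

Let mD : measurable D. Proof. exact: measurable_sublevel. Qed.

Lemma measure_query_sublevel_ge :
  ((1 - gamma * s)%:E * mu D <= mu (T1 `&` D))%E.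
Proof.
have -> : mu (T1 `&` D) = (\int[mu]_(w in D) (1 - gamma * Q w)%:E)%E.
  by have := bernT _ (measurable_sublevel (@measurable_fst _ _ R R) s).
rewrite -integral_cst //; apply: ge0_le_integral => //.
- by move=> w _ /=; rewrite lee_fin subr_ge0.
- apply/measurable_realfun.measurable_EFinP/measurable_funTS.
  exact/measurable_realfun.measurable_funB/measurable_realfun.measurable_funM.
- by move=> w Dw /=; rewrite lee_fin lerB // ler_wpM2l.
Qed.

Lemma measure_proxy_sublevel_le : (mu (D `\` T1) <= (gamma * s)%:E)%E.
Proof.
have mT1 : measurable T1 by exact: measurable_level.
have query_ge := measure_query_sublevel_ge.
have le1 := probability_le1 mu mD.
have eD : mu D = (mu (D `\` T1) + mu (T1 `&` D))%E.
  by rewrite setIC; exact: measureDI.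
have ea : mu (D `\` T1) = (fine (mu (D `\` T1)))%:E.
  by rewrite fineK // fin_num_measure //; exact: measurableD.
have eb : mu (T1 `&` D) = (fine (mu (T1 `&` D)))%:E.
  by rewrite fineK // fin_num_measure //; exact: measurableI.
move: query_ge le1 (measure_ge0 mu (D `\` T1)) (measure_ge0 mu (T1 `&` D)).
rewrite eD {}ea {}eb -EFinD -EFinM !lee_fin.
have : 0 <= gamma * s <= 1 by rewrite gammas_le1 mulr_ge0.
(* (1 - gamma s) (a + b) <= b means a <= gamma s (a + b), and a + b <= 1. *)
nra.
Qed.

End proxy_branch.

Theorem proposition2 (R : realType) (d : measure_display) (Om : measurableType d)
  (mu : probability Om R) (gamma : R) (P Q T : Om -> R) :
  0 <= gamma < 1 ->
  measurable_fun setT P -> measurable_fun setT Q -> measurable_fun setT T ->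
  valid_pvalue mu P ->
  (forall w, 0 <= Q w <= 1) ->
  (forall w, T w = 0 \/ T w = 1) ->
  cond_bernoulli mu T Q P (fun q _ => 1 - gamma * q) ->
  superuniform mu (active_pvalue gamma T Q P).
Proof.
move=> /andP[g0 g1] mP mQ mT [_ validP] _ T01 bernT s /andP[s0 s1].
have gs1 : gamma * s <= 1 by rewrite mulr_ile1 // ltW.
have mT1 : measurable [set w | T w = 1] by exact: measurable_level.
have mP1 : measurable [set w | P w <= (1 - gamma) * s].
  exact: measurable_sublevel.
rewrite active_pvalue_le_setE //.
apply: le_trans (measureU2 _ _ (measurableI _ _ mT1 mP1)) _.
  exact: measurableD (measurable_sublevel mQ s) mT1.
have -> : s%:E = ((gamma * s)%:E + ((1 - gamma) * s)%:E)%E.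
  by rewrite -EFinD mulrBl mul1r addrC subrK.
apply: leeD; first exact: (measure_proxy_sublevel_le mu g0 s0 gs1 mQ mT bernT).
apply: le_trans (le_measure _ _ _ (@subIsetr _ _ _)) (validP _ _).
- by rewrite inE; exact: measurableI.
- by rewrite inE.
rewrite mulr_ge0 ?subr_ge0 ?(ltW g1) //=.
by apply: mulr_ile1; rewrite ?subr_ge0 ?(ltW g1) // lerBlDr lerDl.
Qed.
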